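(* Let $Z$ be any infinite discrete space. Then the remainder $\beta Z\setminus Z$ is not a $\Delta$-space.
   Context: $\beta Z$ is the Stone–Čech compactification of $Z$. A topological space $X$ is a $\Delta$-space if for every decreasing sequence $\{D_n:n\in\omega\}$ of subsets of $X$ with $\bigcap_n D_n=\emptyset$ there is a decreasing sequence $\{V_n:n\in\omega\}$ of open subsets of $X$ with $D_n\subseteq V_n$ for all $n$ and $\bigcap_n V_n=\emptyset$. *)

From HB Require Import structures.
From mathcomp Require Import all_boot all_algebra.
From mathcomp Require Import all_classical all_reals all_analysis.

Set Implicit Arguments.
Unset Strict Implicit.
Unset Printing Implicit Defensive.

Local Open Scope classical_set_scope.

Definition rel_open (T : topologicalType) (A V : set T) : Prop :=
  exists W : set T, open W /\ V = W `&` A.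

Definition Delta_subspace (T : topologicalType) (X : set T) : Prop :=
  forall D : nat -> set T,
    (forall n, D n `<=` X) ->
    (forall n, D n.+1 `<=` D n) ->
    \bigcap_n D n = set0 ->
    exists V : nat -> set T,
      [/\ forall n, V n `<=` X,
          forall n, rel_open X (V n),
          forall n, V n.+1 `<=` V n,
          forall n, D n `<=` V n
        & \bigcap_n V n = set0].

Definition is_stone_cech (Z K : topologicalType) (e : Z -> K) : Prop :=
  [/\ compact [set: K],
      hausdorff_space K,
      [/\ injective e,
          continuous e
        & forall U : set Z, open U -> rel_open (range e) (e @` U)],
      dense (range e)
    & forall (Y : topologicalType) (f : Z -> Y),
        compact [set: Y] -> hausdorff_space Y -> continuous f ->
        exists F : K -> Y, continuous F /\ (forall z, F (e z) = f z)].

From HB Require Import structures.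
From mathcomp Require Import all_boot all_algebra.
From mathcomp Require Import all_classical all_reals all_analysis.

Set Implicit Arguments.
Unset Strict Implicit.
Unset Printing Implicit Defensive.

Local Open Scope classical_set_scope.

(* Core argument (compact_not_Delta): let X be a compact set and F a
   continuous map attaining on X every value of a dense sequence q of a
   perfect compact Hausdorff space Y.  The traces on X of the fibres of F over
   the tails of q decrease to the empty set; if X were a Delta-space they
   would be covered by relatively open sets V n with empty intersection.  The
   images F (X \ V n) are closed and miss the n-th tail of q, so their
   complements are dense open sets, and the Baire theorem for compact
   Hausdorff spaces (proved first) yields a point of F (X) outside all of
   them, i.e. a point of X lying in every V n.

   For the theorem, Y is the Cantor space with a dense enumeration of its
   finitely supported points.  Label Z so that each label recurs along an
   injective sequence and extend z |-> q (label z) to K; cluster points of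
   these sequences lie in the remainder, where F thus attains every q k. *)

Section CompactBaire.
Variable T : topologicalType.
Hypotheses (cT : compact [set: T]) (hT : hausdorff_space T).

Lemma shrink_open_dense (O U : set T) : open O -> O !=set0 ->
  open U -> dense U ->
  exists O', [/\ open O', O' !=set0 & closure O' `<=` O `&` U].
Proof.
move=> oO O0 oU dU; have [x [Ox Ux]] := dU O O0 oO.
have reg := compact_regular hT cT (@filterT _ (nbhs x) _).
have [A] : filter_from (nbhs x) closure (O `&` U).
  by apply: reg; apply: open_nbhs_nbhs; split; [exact: openI|].
rewrite nbhsE => -[B [oB Bx] BA] AOU.
by exists B; split => //; [exists x | exact: subset_trans (closureS BA) AOU].
Qed.

(* Starting from a nonempty open
   set, repeated shrinking gives a chain of nonempty open sets, each with its
   closure inside the previous one and the next dense open set; a cluster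
   point of a sequence picked along the chain lies in all of them. *)
Lemma compact_Baire (U : nat -> set T) :
  (forall n, open (U n)) -> (forall n, dense (U n)) -> dense (\bigcap_n U n).
Proof.
move=> oU dU O O0 oO.
have step n (W : set T) : exists W', open W /\ W !=set0 ->
    [/\ open W', W' !=set0 & closure W' `<=` W `&` U n].
  have [[oW W0]|nW] := pselect (open W /\ W !=set0); last by exists W => /nW.
  have [W' hW'] := shrink_open_dense oW W0 (oU n) (dU n).
  by exists W'.
pose next n W := projT1 (cid (step n W)).
pose fix chain n := if n is m.+1 then next m (chain m) else O.
have chain_open n : open (chain n) /\ chain n !=set0.
  elim: n => [//|n IH].
  by have [oW W0 _] := projT2 (cid (step n (chain n))) IH.
have chain_closure n : closure (chain n.+1) `<=` chain n `&` U n.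
  by have [] := projT2 (cid (step n (chain n))) (chain_open n).
have chain_dec n m : (n <= m)%N -> chain m `<=` chain n.
  move=> /subnK <-; elim: (m - n)%N => [//|d IH] x /= hx.
  by apply: IH; have [] := chain_closure _ x (subset_closure hx).
pose pt n := projT1 (cid (chain_open n).2).
have [p [_ p_cluster]] := cT (F := pt @ \oo) _ filterT.
have p_closure n : closure (chain n) p.
  rewrite clusterE in p_cluster; apply: p_cluster; exists n => // m /= nm.
  exact: chain_dec nm _ (projT2 (cid (chain_open m).2)).
have [Op _] := chain_closure 0%N p (p_closure 1%N).
exists p; split => // n _; exact: (chain_closure n p (p_closure n.+1)).2.
Qed.

End CompactBaire.

(* In a perfect T1 space removing one point from a dense set keeps it
   dense: no nonempty open set is reduced to that point. *)
Lemma dense_setD1 (T : topologicalType) (S : set T) (a : T) :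
  hausdorff_space T -> perfect_set [set: T] -> dense S -> dense (S `\` [set a]).
Proof.
move=> hT pT dS O O0 oO.
have oOa : open (O `\` [set a]).
  apply: openI => //; apply: closed_openC.
  by apply: accessible_closed_set1; exact: hausdorff_accessible.
have Oa0 : O `\` [set a] !=set0.
  have [x [y [Ox Oy /eqP xy]]] := perfectTP_ex.1 pT O oO O0.
  have [xa|xa] := pselect (x = a); last by exists x.
  by exists y; split => // ya; apply: xy; rewrite xa ya.
by have [z [[Oz za] Sz]] := dS _ Oa0 oOa; exists z.
Qed.

Lemma dense_closed_setT (T : topologicalType) (S C : set T) :
  dense S -> closed C -> S `<=` C -> C = setT.
Proof.
move=> dS cC SC; apply/seteqP; split => // x _; apply: contrapT => Cx.
have [y [Cy Sy]] := dS (~` C) (ex_intro _ x Cx) (closed_openC cC).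
exact: Cy (SC _ Sy).
Qed.

Lemma compact_image_closed (T Y : topologicalType) (F : T -> Y) (A : set T) :
  hausdorff_space Y -> continuous F -> compact A -> closed (F @` A).
Proof.
move=> hY cF cA; apply: compact_closed => //.
by apply: continuous_compact => //; exact: continuous_subspaceT.
Qed.

Lemma compact_setD_rel_open (T : topologicalType) (X V : set T) :
  compact X -> rel_open X V -> compact (X `\` V).
Proof.
move=> cX [W [oW ->]].
have -> : X `\` (W `&` X) = X `&` ~` W.
  apply/seteqP; split => x [Xx h]; split => //; last by case.
  by move=> Wx; apply: h.
by apply: compact_closedI => //; rewrite closedC.
Qed.

(* The values of a sequence q, omitting its first n terms (as points:
   a value is dropped if it coincides with some q j, j < n). *)
Fixpoint tail_values (T : Type) (q : nat -> T) (n : nat) : set T :=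
  if n is m.+1 then @tail_values T q m `\` [set q m] else range q.
Arguments tail_values {T} q n.

Lemma tail_values_dense (T : topologicalType) (q : nat -> T) n :
  hausdorff_space T -> perfect_set [set: T] -> dense (range q) ->
  dense (tail_values q n).
Proof. by move=> hT pT dq; elim: n => [//|n IH] /=; exact: dense_setD1. Qed.

Lemma tail_values_bigcap (T : Type) (q : nat -> T) :
  \bigcap_n tail_values q n = set0.
Proof.
apply/seteqP; split => // y /= hy.
have [k _ qk] : range q y by exact: hy 0%N I.
by have [_] := hy k.+1 I; apply.
Qed.

Lemma Delta_tail_fibres (K Y : topologicalType) (X : set K) (F : K -> Y)
    (q : nat -> Y) :
  Delta_subspace X -> exists V : nat -> set K,
    [/\ forall n, rel_open X (V n),
        forall n, X `&` F @^-1` tail_values q n `<=` V n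
      & \bigcap_n V n = set0].
Proof.
move=> Delta; pose D n := X `&` F @^-1` tail_values q n.
have D_sub n : D n `<=` X by move=> x [].
have D_dec n : D n.+1 `<=` D n by move=> x [Xx [tx _]].
have D_empty : \bigcap_n D n = set0.
  apply/seteqP; split => // x Dx.
  suff : (\bigcap_n tail_values q n) (F x) by rewrite tail_values_bigcap.
  by move=> n _; exact: (Dx n I).2.
by have [V [_ V_open _ DV V0]] := Delta D D_sub D_dec D_empty; exists V.
Qed.

(* With V n as above, the compact images B n = F (X \ V n)
   miss the n-th tail of q, so their complements are dense open sets; by
   Baire some y avoids every B n, and y = F x with x in X since F (X) is
   closed and contains range q.  Then x lies in every V n, which is absurd. *)
Lemma compact_not_Delta (K Y : topologicalType) (X : set K) (F : K -> Y)
    (q : nat -> Y) :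
  compact X -> continuous F -> compact [set: Y] -> hausdorff_space Y ->
  perfect_set [set: Y] -> dense (range q) -> range q `<=` F @` X ->
  ~ Delta_subspace X.
Proof.
move=> cX cF cY hY pY dq qFX /(Delta_tail_fibres F q) [V [V_open DV V0]].
pose B n := F @` (X `\` V n).
have B_open n : open (~` B n).
  apply: closed_openC; apply: compact_image_closed hY cF _.
  exact: compact_setD_rel_open cX (V_open n).
have B_dense n : dense (~` B n).
  move=> O O0 oO; have [y [Oy ty]] := tail_values_dense n hY pY dq O0 oO.
  by exists y; split => // -[x [Xx nVx] Fxy]; apply/nVx/DV; split; rewrite //= Fxy.
have [y [_ y_notB]] := compact_Baire cY hY B_open B_dense
  (ex_intro _ (q 0%N) I) openT.
have FX : F @` X = setT.
  exact: dense_closed_setT dq (compact_image_closed hY cF cX) qFX.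
have [x Xx Fxy] : (F @` X) y by rewrite FX.
suff : (\bigcap_n V n) x by rewrite V0.
by move=> n _; apply: contrapT => nVx; apply: (y_notB n I); exists x.
Qed.

(* The point of the Cantor space with finitely many prescribed leading
   digits and zeros afterwards; these points, enumerated through the
   countable type of bit sequences, form a dense sequence. *)
Definition prefix_point (s : seq bool) : cantor_space := fun i => nth false s i.

Definition cantor_enum (k : nat) : cantor_space :=
  prefix_point (odflt [::] (unpickle k)).

Lemma cantor_enum_dense : dense (range cantor_enum).
Proof.
move=> O [x Ox] oO.
have trunc_cvg : (fun m => prefix_point (mkseq x m)) @ \oo --> x.
  apply/pointwise_cvgP => i A /= /nbhs_singleton Axi.
  by exists i.+1 => // m /= im; rewrite /prefix_point nth_mkseq.
have [m _ hm] := trunc_cvg _ (open_nbhs_nbhs (conj oO Ox)).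
exists (prefix_point (mkseq x m)); split; first exact: (hm m (leqnn m)).
by exists (pickle (mkseq x m)) => //; rewrite /cantor_enum pickleK.
Qed.

Lemma infinite_labelling (Z : Type) : infinite_set [set: Z] ->
  exists (lab : Z -> nat) (u : nat -> nat -> Z),
    (forall k, injective (u k)) /\ (forall k j, lab (u k j) = k).
Proof.
move=> /infiniteP /card_leP [g].
pose iota n := \val (g (@SigSub _ _ _ n (mem_set I))).
have iota_inj : injective iota.
  move=> a b /val_inj h.
  by have /(congr1 val) := @inj _ _ _ g _ _ (mem_set I) (mem_set I) h.
pose idx := pinv_ (fun=> 0%N) setT iota.
have idxK : cancel iota idx.
  by move=> n; rewrite /idx pinvKV // ?in_setT //; move=> a b _ _; exact: iota_inj.
exists (fun z => (odflt (0%N, 0%N) (@unpickle (nat * nat)%type (idx z))).1).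
exists (fun k j => iota (pickle (k, j))); split.
  by move=> k a b /iota_inj /(pcan_inj (@pickleK _)) [].
by move=> k j; rewrite idxK pickleK.
Qed.

Section StoneCechRemainder.
Variables (Z : discreteTopologicalType) (K : topologicalType) (e : Z -> K).
Hypotheses (hK : hausdorff_space K) (e_inj : injective e)
  (e_emb : forall U : set Z, open U -> rel_open (range e) (e @` U))
  (e_dense : dense (range e)).

(* The points of Z are isolated in K: the open set of K cutting out {e z}
   on range e cannot contain a further point, since removing that point would
   leave a nonempty open set missing the dense set range e. *)
Lemma image_point_open (z : Z) : open [set e z].
Proof.
have [W [oW hW]] := @e_emb [set z] (discrete_open _).
have eW : W (e z) by have [] : (W `&` range e) (e z) by rewrite -hW; exists z.
suff -> : [set e z] = W by [].
apply/seteqP; split => [_ -> //|w Ww]; apply: contrapT => wz.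
have oO : open (W `&` ~` [set e z]).
  apply: openI => //; apply: closed_openC.
  by apply: accessible_closed_set1; exact: hausdorff_accessible.
have [p [[Wp pz] [z' _ ez']]] := e_dense (ex_intro _ w (conj Ww wz)) oO.
subst p.
have : (W `&` range e) (e z') by split => //; exists z'.
by rewrite -hW => -[z'' /= -> ez]; apply: pz; rewrite ez.
Qed.

Lemma remainder_closed : closed (~` range e).
Proof.
rewrite closedC openE => _ [z _ <-].
apply: filterS (open_nbhs_nbhs (conj (image_point_open z) erefl)).
by move=> _ ->; exists z.
Qed.

(* A cluster point of an injective sequence of Z lies in the remainder:
   the sequence eventually leaves the open point {e z}. *)
Lemma cluster_remainder (u : nat -> Z) (x : K) :
  injective u -> cluster ((e \o u) @ \oo) x -> ~ range e x.
Proof.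
move=> u_inj clx [z _ xz].
have avoid : ((e \o u) @ \oo) [set w | w <> e z].
  have [[j0 hj0]|nj] := pselect (exists j, u j = z).
    exists j0.+1 => // j /= hj /e_inj ujz.
    by move: hj; rewrite (u_inj _ _ (etrans ujz (esym hj0))) ltnn.
  by exists 0%N => // j _ /= /e_inj ujz; apply: nj; exists j.
have nbz : nbhs x [set e z].
  by rewrite -xz; apply: open_nbhs_nbhs; split => //; exact: image_point_open.
by have [w [/= nw wz]] := clx _ _ avoid nbz; apply: nw.
Qed.

Lemma remainder_fibre (Y : topologicalType) (F : K -> Y) (u : nat -> Z) (y : Y) :
  compact [set: K] -> hausdorff_space Y -> continuous F -> injective u ->
  (forall j, F (e (u j)) = y) -> exists2 x, ~ range e x & F x = y.
Proof.
move=> cK hY cF u_inj Fu.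
have [x [_ clx]] := @cK ((e \o u) @ \oo) _ filterT.
exists x; first exact: cluster_remainder clx.
apply: contrapT => Fxy.
have nbx : nbhs x (F @^-1` (~` [set y])).
  apply: cF; apply: open_nbhs_nbhs; split => //; apply: closed_openC.
  by apply: accessible_closed_set1; exact: hausdorff_accessible.
have ev : ((e \o u) @ \oo) (range (e \o u)) by exists 0%N => // j _; exists j.
by have [_ [[j _ <-] /= h]] := clx _ _ ev nbx; apply: h; exact: Fu.
Qed.

End StoneCechRemainder.

Lemma stone_cech_remainder_compact (Z : discreteTopologicalType)
    (K : topologicalType) (e : Z -> K) :
  is_stone_cech e -> compact (~` range e).
Proof.
move=> [cK hK [_ _ e_emb] e_dense _].
exact: subclosed_compact (remainder_closed hK e_emb e_dense) cK _.
Qed.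

(* For infinite discrete Z, every sequence q in a compact Hausdorff space Y
   is attained on the remainder by a continuous map K -> Y: label Z so that
   every label occurs along an injective sequence, extend z |-> q (label z)
   to K, and use remainder_fibre. *)
Lemma stone_cech_remainder_onto (Z : discreteTopologicalType)
    (K Y : topologicalType) (e : Z -> K) (q : nat -> Y) :
  infinite_set [set: Z] -> is_stone_cech e ->
  compact [set: Y] -> hausdorff_space Y ->
  exists2 F : K -> Y, continuous F & range q `<=` F @` (~` range e).
Proof.
move=> Zinf [cK hK [e_inj _ e_emb] e_dense ext] cY hY.
have [lab [u [u_inj labu]]] := infinite_labelling Zinf.
have [F [F_cont FE]] : exists F : K -> Y,
    continuous F /\ forall z, F (e z) = q (lab z).
  apply: ext => // z A /nbhs_singleton Az.
  by apply: filterS (discrete_set1 z) => _ ->.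
exists F => // _ [k _ <-].
have [x Xx Fx] := remainder_fibre hK e_inj e_emb e_dense cK hY F_cont (u_inj k)
  (fun j => etrans (FE _) (congr1 q (labu k j))).
by exists x.
Qed.

Theorem proposition3p16 (Z : discreteTopologicalType) (K : topologicalType)
    (e : Z -> K) :
  infinite_set [set: Z] ->
  is_stone_cech e ->
  ~ Delta_subspace (~` range e).
Proof.
move=> Zinf sc.
have [F F_cont qF] := stone_cech_remainder_onto cantor_enum Zinf sc
  cantor_space_compact cantor_space_hausdorff.
apply: (compact_not_Delta _ F_cont cantor_space_compact cantor_space_hausdorff
  cantor_perfect cantor_enum_dense qF).
exact: stone_cech_remainder_compact sc.
Qed.
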